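(* Let $\mu\ge1$. The prefix-average comparator for $\ge$ over $\{0,\dots,\mu\}$, i.e. the language of pairs $(A,B)$ of sequences in $\{0,\dots,\mu\}^\omega$ (read synchronously as words over $\{0,\dots,\mu\}^2$) with $\mathrm{PLA}(A)\ge\mathrm{PLA}(B)$, is not $\omega$-regular.
   Context: $\mathrm{Sum}(M[0,n-1])=\sum_{j=0}^{n-1}M[j]$. Prefix-average comparison: $\mathrm{PLA}(A)\ge\mathrm{PLA}(B)$ holds iff there are only finitely many indices $i$ with $\mathrm{Sum}(B[0,i-1])\ge\mathrm{Sum}(A[0,i-1])$ and infinitely many indices $i$ with $\mathrm{Sum}(A[0,i-1])>\mathrm{Sum}(B[0,i-1])$. *)

From mathcomp Require Import all_boot.
Set Implicit Arguments. Unset Strict Implicit. Unset Printing Implicit Defensive.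

Definition prefix_sum (M : nat -> nat) (n : nat) : nat := \sum_(j < n) M j.

Definition PLA_ge (A B : nat -> nat) : Prop :=
  (exists N, forall i, N <= i -> ~ (prefix_sum A i <= prefix_sum B i))
  /\ (forall N, exists i, N <= i /\ prefix_sum B i < prefix_sum A i).

Definition buchi_accepts (Sigma Q : finType) (init : pred Q)
  (delta : Q -> Sigma -> Q -> bool) (acc : pred Q) (w : nat -> Sigma) : Prop :=
  exists r : nat -> Q,
    init (r 0) /\ (forall i, delta (r i) (w i) (r i.+1)) /\
    (forall N, exists i, N <= i /\ acc (r i)).

Definition omega_regular (Sigma : finType) (L : (nat -> Sigma) -> Prop) : Prop :=
  exists (Q : finType) (init : pred Q) (delta : Q -> Sigma -> Q -> bool)
         (acc : pred Q),
    forall w, L w <-> buchi_accepts init delta acc w.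

Definition PLA_comparator (mu : nat) (w : nat -> 'I_mu.+1 * 'I_mu.+1) : Prop :=
  PLA_ge (fun i => nat_of_ord (w i).1) (fun i => nat_of_ord (w i).2).

(** The witness pair gives A the first K+1 letters, B the next K letters, and
    then alternates starting with A, where K is the number of states of a
    putative Büchi automaton. Prefix sums of A then stay strictly ahead and
    infinitely often lead by exactly one. An accepting run repeats a state
    inside B's block of K letters; repeating the segment between the two
    visits gives an accepted word whose B-prefix-sums catch up with those of
    A infinitely often, so it is not in the language. *)

From mathcomp Require Import all_boot.
From mathcomp Require Import zify.

Set Implicit Arguments.
Unset Strict Implicit.
Unset Printing Implicit Defensive.

Lemma prefix_sum0 (M : nat -> nat) : prefix_sum M 0 = 0.
Proof. by rewrite /prefix_sum big_ord0. Qed.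

Lemma prefix_sumS (M : nat -> nat) n : prefix_sum M n.+1 = prefix_sum M n + M n.
Proof. by rewrite /prefix_sum big_ord_recr. Qed.

Lemma eq_prefix_sum (M M' : nat -> nat) : M =1 M' -> prefix_sum M =1 prefix_sum M'.
Proof. by move=> eqM n; apply: eq_bigr => j _. Qed.

Lemma PLA_ge_eq (A A' B B' : nat -> nat) :
  A =1 A' -> B =1 B' -> PLA_ge A B -> PLA_ge A' B'.
Proof.
move=> /eq_prefix_sum eqA /eq_prefix_sum eqB [[N lead] often]; split.
  by exists N => i /lead; rewrite -eqA -eqB.
by move=> n; have [i] := often n; rewrite eqA eqB; exists i.
Qed.

Definition repeat_segment (T : Type) (f : nat -> T) (p q : nat) (i : nat) : T :=
  if i < q then f i else f (i - (q - p)).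

Lemma repeat_segment_map (T U : Type) (g : T -> U) (f : nat -> T) p q i :
  g (repeat_segment f p q i) = repeat_segment (fun j => g (f j)) p q i.
Proof. by rewrite /repeat_segment; case: ifP. Qed.

Lemma prefix_sum_repeat_segment (M : nat -> nat) p q k : p <= q ->
  prefix_sum (repeat_segment M p q) (q + k) + prefix_sum M p
  = prefix_sum M (p + k) + prefix_sum M q.
Proof.
move=> le_pq; elim: k => [|k IHk].
  rewrite !addn0 addnC; congr (_ + _); apply: eq_bigr => j _.
  by rewrite /repeat_segment ltn_ord.
rewrite !addnS !prefix_sumS /repeat_segment ltnNge leq_addr /=.
have -> : q + k - (q - p) = p + k by lia.
by rewrite -/(repeat_segment M p q); lia.
Qed.

(** Subtraction-free form of: the gap [A_i - B_i], shifted by the gap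
    accumulated on [[p, q)], is eventually positive. *)
Lemma PLA_ge_repeat_segment (A B : nat -> nat) p q : p <= q ->
  PLA_ge (repeat_segment A p q) (repeat_segment B p q) ->
  exists N, forall i, N <= i ->
    prefix_sum B i + prefix_sum B q + prefix_sum A p
    < prefix_sum A i + prefix_sum A q + prefix_sum B p.
Proof.
move=> le_pq [[N lead] _]; exists (N + p) => i le_Ni.
have /negP := lead (q + (i - p)) ltac:(lia); rewrite -ltnNge => gap.
have := prefix_sum_repeat_segment A (i - p) le_pq.
have := prefix_sum_repeat_segment B (i - p) le_pq.
rewrite subnKC; lia.
Qed.

Section BuchiPumping.

Variables (Sigma Q : finType) (init : pred Q) (delta : Q -> Sigma -> Q -> bool).
Variable acc : pred Q.

Lemma buchi_accepts_repeat_segment (w : nat -> Sigma) (r : nat -> Q) p q :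
  init (r 0) -> (forall i, delta (r i) (w i) (r i.+1)) ->
  (forall N, exists i, N <= i /\ acc (r i)) ->
  p < q -> r p = r q -> buchi_accepts init delta acc (repeat_segment w p q).
Proof.
move=> r0 r_step r_acc lt_pq r_loop.
exists (repeat_segment r p q); split; [|split].
- by rewrite /repeat_segment (leq_ltn_trans (leq0n p) lt_pq).
- move=> i; rewrite /repeat_segment.
  case: (ltnP i q) => [lt_iq|le_qi].
    case: (ltnP i.+1 q) => [_|le_q_Si]; first exact: r_step.
    have eq_iq : i.+1 = q by apply/eqP; rewrite eqn_leq lt_iq.
    by rewrite (_ : i.+1 - (q - p) = p) ?r_loop -?eq_iq //; lia.
  rewrite ltnNge (leqW le_qi) /= (_ : i.+1 - (q - p) = (i - (q - p)).+1) //.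
  lia.
- move=> N; have [i [le_Ni acc_i]] := r_acc (N + q).
  exists (i + (q - p)); split; first lia.
  by rewrite /repeat_segment ltnNge (_ : q <= _) ?addnK //; lia.
Qed.

Lemma run_repeats_state (r : nat -> Q) a :
  exists p q, [/\ a <= p, p < q, q <= a + #|Q| & r p = r q].
Proof.
pose f (j : 'I_#|Q|.+1) := r (a + j).
have /injectivePn [j1 [j2 ne_j eq_r]] : ~~ injectiveb f.
  apply/injectiveP => /leq_card; rewrite card_ord; lia.
have [lt_j|lt_j|eq_j] := ltngtP j1 j2; last by rewrite (val_inj eq_j) eqxx in ne_j.
- exists (a + j1), (a + j2); have := ltn_ord j2; split => //; lia.
- exists (a + j2), (a + j1); have := ltn_ord j1; split => //; lia.
Qed.

End BuchiPumping.

Definition letter (mu : nat) (x : bool) : 'I_mu.+1 * 'I_mu.+1 :=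
  if x then (inord 1, ord0) else (ord0, inord 1).

Lemma PLA_comparator_letter mu (w : nat -> 'I_mu.+1 * 'I_mu.+1) (x : nat -> bool) :
  1 <= mu -> (forall i, w i = letter mu (x i)) ->
  PLA_comparator w <-> PLA_ge (fun i => x i : nat) (fun i => ~~ x i : nat).
Proof.
move=> mu_ge1 w_x.
have w1 i : nat_of_ord (w i).1 = x i by rewrite w_x; case: (x i); rewrite //= inordK.
have w2 i : nat_of_ord (w i).2 = ~~ x i by rewrite w_x; case: (x i); rewrite //= inordK.
by split; apply: PLA_ge_eq.
Qed.

Section Witness.

Variable K : nat.

Definition witness (i : nat) : bool :=
  (i <= K) || ((K + K < i) && odd (i - (K + K))).

Local Notation ones n := (prefix_sum (fun j => nat_of_bool (witness j)) n).
Local Notation zeros n := (prefix_sum (fun j => nat_of_bool (~~ witness j)) n).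

Lemma witness_block j : K < j <= K + K -> witness j = false.
Proof. by rewrite /witness => /andP[lt_Kj le_jKK]; rewrite leqNgt lt_Kj ltnNge le_jKK. Qed.

Lemma prefix_witness_head i : i <= K.+1 -> ones i = i /\ zeros i = 0.
Proof.
elim: i => [|i IHi] le_iK; first by rewrite !prefix_sum0.
rewrite !prefix_sumS; have [-> ->] := IHi (ltnW le_iK).
by rewrite /witness (_ : i <= K) //; lia.
Qed.

Lemma prefix_witness_block k : k <= K -> ones (K.+1 + k) = K.+1 /\ zeros (K.+1 + k) = k.
Proof.
elim: k => [|k IHk] le_kK; first by rewrite addn0; apply: prefix_witness_head.
rewrite addnS !(prefix_sumS _ (K.+1 + k)); have [-> ->] := IHk (ltnW le_kK).
by rewrite witness_block /=; lia.
Qed.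

Lemma prefix_witness_tail m : ones (K.+1 + K + m) = zeros (K.+1 + K + m) + 1 + odd m.
Proof.
elim: m => [|m IHm]; first by rewrite addn0; have [-> ->] := prefix_witness_block (leqnn K); lia.
rewrite addnS !(prefix_sumS _ (K.+1 + K + m)) IHm.
have -> : witness (K.+1 + K + m) = odd m.+1.
  rewrite /witness (_ : K.+1 + K + m - (K + K) = m.+1); last lia.
  have -> : (K.+1 + K + m <= K) = false by apply/negbTE; rewrite -ltnNge; lia.
  by have -> : K + K < K.+1 + K + m by lia.
by rewrite /=; case: (odd m) => /=; lia.
Qed.

Lemma witness_lead i : 0 < i -> zeros i < ones i.
Proof.
move=> i_gt0; case: (leqP i K.+1) => [le_iK|lt_Ki].
  by have [-> ->] := prefix_witness_head le_iK.
case: (leqP i (K.+1 + K)) => [le_i2K|lt_2Ki].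
  by have := @prefix_witness_block (i - K.+1) ltac:(lia); rewrite subnKC; lia.
by have := prefix_witness_tail (i - (K.+1 + K)); rewrite subnKC; lia.
Qed.

Lemma witness_lead_by_one N : exists i, N <= i /\ ones i = (zeros i).+1.
Proof.
exists (K.+1 + K + N.*2); split; first lia.
by rewrite prefix_witness_tail odd_double; lia.
Qed.

Lemma PLA_ge_witness : PLA_ge (fun i => witness i : nat) (fun i => ~~ witness i : nat).
Proof.
split; first by exists 1 => i /witness_lead; rewrite ltnNge => /negP.
by move=> N; have [i [le_Ni tie]] := witness_lead_by_one N; exists i; rewrite tie.
Qed.

(** Inside B's block the segment [[p, q)] adds nothing to A and at least one
    to B, which cancels the lead of one that A has infinitely often. *)
Lemma not_PLA_ge_repeat_witness p q : K < p -> p < q -> q <= K.+1 + K ->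
  ~ PLA_ge (fun i => repeat_segment witness p q i : nat)
           (fun i => ~~ repeat_segment witness p q i : nat).
Proof.
move=> lt_Kp lt_pq le_q2K.
move/(PLA_ge_eq (repeat_segment_map nat_of_bool witness p q)
                (repeat_segment_map (fun b => nat_of_bool (~~ b)) witness p q)).
move/(PLA_ge_repeat_segment (ltnW lt_pq)) => [N lead].
have [i [le_Ni tie]] := witness_lead_by_one N.
have [onesp zerosp] := @prefix_witness_block (p - K.+1) ltac:(lia).
have [onesq zerosq] := @prefix_witness_block (q - K.+1) ltac:(lia).
move: (lead i le_Ni) onesp zerosp onesq zerosq; rewrite !subnKC; lia.
Qed.

End Witness.

Theorem theorem19 (mu : nat) (hmu : 1 <= mu) :
  ~ omega_regular (@PLA_comparator mu).
Proof.
move=> [Q [init [delta [acc L_recognized]]]].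
pose K := #|Q|.
pose w i := letter mu (witness K i).
have [r [r0 [r_step r_acc]]] : buchi_accepts init delta acc w.
  by apply/L_recognized/(PLA_comparator_letter hmu (fun=> erefl))/PLA_ge_witness.
have [p [q [le_Kp lt_pq le_q r_loop]]] := run_repeats_state r K.+1.
have /L_recognized : buchi_accepts init delta acc (repeat_segment w p q).
  exact: buchi_accepts_repeat_segment r0 r_step r_acc lt_pq r_loop.
move/(PLA_comparator_letter hmu (fun i => esym (repeat_segment_map (letter mu) _ p q i))).
by apply: not_PLA_ge_repeat_witness; rewrite -/K; lia.
Qed.
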